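(* In the 3-body problem in ${\bf H}^2$ with masses $m_1,m_2,m_3>0$, fix $z>1$ and $\rho=(z^2-1)^{1/2}$. There exists $\omega\ne0$ such that ${\bf q}_i(t)=(\rho\cos(\omega t+\alpha_i),\rho\sin(\omega t+\alpha_i),z)$ with $\alpha_1=0,\alpha_2=2\pi/3,\alpha_3=4\pi/3$ is a solution of the equations of motion (the equilateral triangle rotating in its own plane $z=$ constant as an elliptic relative equilibrium) if and only if $m_1=m_2=m_3$.
   Context: The $n$-body problem in ${\bf H}^2$ (Weierstrass model): with the Lorentz inner product ${\bf a}\boxdot{\bf b}=a_xb_x+a_yb_y-a_zb_z$ on $\mathbb R^3$, ${\bf H}^2=\{(x,y,z): x^2+y^2-z^2=-1,\ z>0\}$. Bodies of masses $m_1,\dots,m_n>0$ have positions ${\bf q}_i=(x_i,y_i,z_i)\in{\bf H}^2$ and satisfy $$\ddot{\bf q}_i=\sum_{j\ne i}\frac{m_j[{\bf q}_j+({\bf q}_i\boxdot{\bf q}_j){\bf q}_i]}{[({\bf q}_i\boxdot{\bf q}_j)^2-1]^{3/2}}+(\dot{\bf q}_i\boxdot\dot{\bf q}_i){\bf q}_i,\qquad {\bf q}_i\boxdot{\bf q}_i=-1,\ \ {\bf q}_i\boxdot\dot{\bf q}_i=0,$$ $i=1,\dots,n$, defined only for collisionless configurations (${\bf q}_i\ne{\bf q}_j$ for $i\ne j$). *)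

From Stdlib Require Import Reals List.
Import ListNotations.
Open Scope R_scope.

Record V3 := mkV3 { vx : R; vy : R; vz : R }.

Definition v0 : V3 := mkV3 0 0 0.
Definition vadd (a b : V3) : V3 := mkV3 (vx a + vx b) (vy a + vy b) (vz a + vz b).
Definition vscale (c : R) (a : V3) : V3 := mkV3 (c * vx a) (c * vy a) (c * vz a).

Definition lor (a b : V3) : R := vx a * vx b + vy a * vy b - vz a * vz b.

Definition force (n : nat) (m : nat -> R) (q : nat -> V3) (i : nat) : V3 :=
  fold_right vadd v0
    (map (fun j => if Nat.eqb j i then v0 else
            vscale (m j / Rpower ((lor (q i) (q j)) ^ 2 - 1) (3 / 2))
                   (vadd (q j) (vscale (lor (q i) (q j)) (q i))))
         (seq 0 n)).

Definition has_deriv (f g : R -> V3) : Prop :=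
  forall t, derivable_pt_lim (fun s => vx (f s)) t (vx (g t)) /\
            derivable_pt_lim (fun s => vy (f s)) t (vy (g t)) /\
            derivable_pt_lim (fun s => vz (f s)) t (vz (g t)).

(* q : nat -> R -> V3 (body index, time) is a solution, defined for all t in R,
   of the n-body equations of motion in H^2 (Weierstrass model). *)
Definition is_solution (n : nat) (m : nat -> R) (q : nat -> R -> V3) : Prop :=
  (forall t i j, (i < n)%nat -> (j < n)%nat -> i <> j -> q i t <> q j t) /\
  (forall i, (i < n)%nat ->
     exists v a : R -> V3,
       has_deriv (q i) v /\ has_deriv v a /\
       forall t,
         a t = vadd (force n m (fun j => q j t) i)
                    (vscale (lor (v t) (v t)) (q i t)) /\
         lor (q i t) (q i t) = -1 /\
         lor (q i t) (v t) = 0 /\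
         vz (q i t) > 0).

(* Masses of the three bodies (indices 0,1,2 correspond to bodies 1,2,3). *)
Definition mass3 (m1 m2 m3 : R) (i : nat) : R :=
  match i with 0%nat => m1 | 1%nat => m2 | _ => m3 end.

Definition alpha3 (i : nat) : R :=
  match i with 0%nat => 0 | 1%nat => 2 * PI / 3 | _ => 4 * PI / 3 end.

Definition rot_triangle (z w : R) (i : nat) (t : R) : V3 :=
  let rho := sqrt (z ^ 2 - 1) in
  mkV3 (rho * cos (w * t + alpha3 i)) (rho * sin (w * t + alpha3 i)) z.

From Stdlib Require Import Reals Lra Lia List FunctionalExtensionality.
Open Scope R_scope.

(* Along the rotating equilateral triangle every vertex stays on the circle
   z = const of Euclidean radius rho = sqrt (z^2 - 1), and any two distinct
   vertices have the same Lorentz product c = -(3 z^2 - 1)/2, because their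
   phases differ by 2pi/3 or 4pi/3.  Hence every mutual force term carries the
   same factor 1/D with D = (c^2 - 1)^(3/2), and the equations of motion
   reduce to algebraic identities in the masses and w.
   - Vertical component: the acceleration has no z-part, which forces
     (M - m_i) z (1 + c) / D + rho^2 w^2 z = 0 for each body (M = total mass);
     since z (1 + c) <> 0, all masses coincide.
   - Conversely, for equal masses mu the planar components also balance, since
     cos and sin of the three phases sum to zero, and everything holds exactly
     when w^2 = 3 mu / D, which has a nonzero solution w. *)

Lemma derivable_pt_lim_phase (w a t : R) :
  derivable_pt_lim (fun s => w * s + a) t w.
Proof.
  pose proof (derivable_pt_lim_plus _ _ t _ _
    (derivable_pt_lim_scal id w t _ (derivable_pt_lim_id t))
    (derivable_pt_lim_const a t)) as H.
  replace (w * 1 + 0) with w in H by ring. exact H.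
Qed.

Lemma derivable_pt_lim_cos_phase (A w a t : R) :
  derivable_pt_lim (fun s => A * cos (w * s + a)) t (- A * w * sin (w * t + a)).
Proof.
  replace (- A * w * sin (w * t + a)) with (A * (- sin (w * t + a) * w)) by ring.
  apply derivable_pt_lim_scal.
  exact (derivable_pt_lim_comp _ cos t _ _ (derivable_pt_lim_phase w a t)
           (derivable_pt_lim_cos _)).
Qed.

Lemma derivable_pt_lim_sin_phase (A w a t : R) :
  derivable_pt_lim (fun s => A * sin (w * s + a)) t (A * w * cos (w * t + a)).
Proof.
  replace (A * w * cos (w * t + a)) with (A * (cos (w * t + a) * w)) by ring.
  apply derivable_pt_lim_scal.
  exact (derivable_pt_lim_comp _ sin t _ _ (derivable_pt_lim_phase w a t)
           (derivable_pt_lim_sin _)).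
Qed.

Lemma V3_ext (a b : V3) : vx a = vx b -> vy a = vy b -> vz a = vz b -> a = b.
Proof. destruct a, b; cbn; intros; subst; reflexivity. Qed.

Lemma has_deriv_unique (f g1 g2 : R -> V3) :
  has_deriv f g1 -> has_deriv f g2 -> g1 = g2.
Proof.
  intros H1 H2. apply functional_extensionality. intro t.
  destruct (H1 t) as [A1 [B1 C1]], (H2 t) as [A2 [B2 C2]].
  apply V3_ext; eapply uniqueness_limite; eassumption.
Qed.

Lemma cos_2PI3 : cos (2 * PI / 3) = - 1 / 2.
Proof.
  replace (2 * PI / 3) with (PI - PI / 3) by field.
  rewrite Rtrigo_facts.cos_pi_minus, cos_PI3. lra.
Qed.

Lemma cos_4PI3 : cos (4 * PI / 3) = - 1 / 2.
Proof. replace (4 * PI / 3) with (PI / 3 + PI) by field. rewrite neg_cos, cos_PI3. lra. Qed.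

Lemma sin_2PI3 : sin (2 * PI / 3) = sin (PI / 3).
Proof. replace (2 * PI / 3) with (PI - PI / 3) by field. apply sin_PI_x. Qed.

Lemma sin_4PI3 : sin (4 * PI / 3) = - sin (PI / 3).
Proof. replace (4 * PI / 3) with (PI / 3 + PI) by field. apply neg_sin. Qed.

Lemma cos_alpha3_diff (i j : nat) : (i < 3)%nat -> (j < 3)%nat -> i <> j ->
  cos (alpha3 i - alpha3 j) = - 1 / 2.
Proof.
  intros Hi Hj Hij.
  destruct i as [|[|[|i]]], j as [|[|[|j]]]; try lia; unfold alpha3;
  [ replace (0 - 2 * PI / 3) with (- (2 * PI / 3)) by ring
  | replace (0 - 4 * PI / 3) with (- (4 * PI / 3)) by ring
  | replace (2 * PI / 3 - 0) with (2 * PI / 3) by ring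
  | replace (2 * PI / 3 - 4 * PI / 3) with (- (2 * PI / 3)) by field
  | replace (4 * PI / 3 - 0) with (4 * PI / 3) by ring
  | replace (4 * PI / 3 - 2 * PI / 3) with (2 * PI / 3) by field ];
  rewrite ?cos_neg, ?cos_2PI3, ?cos_4PI3; reflexivity.
Qed.

Lemma sum_cos_alpha3 (th : R) :
  cos (th + alpha3 0) + cos (th + alpha3 1) + cos (th + alpha3 2) = 0.
Proof. unfold alpha3. rewrite !cos_plus, cos_0, sin_0, cos_2PI3, cos_4PI3, sin_2PI3, sin_4PI3. field. Qed.

Lemma sum_sin_alpha3 (th : R) :
  sin (th + alpha3 0) + sin (th + alpha3 1) + sin (th + alpha3 2) = 0.
Proof. unfold alpha3. rewrite !sin_plus, cos_0, sin_0, cos_2PI3, cos_4PI3, sin_2PI3, sin_4PI3. field. Qed.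

Definition rho (z : R) : R := sqrt (z ^ 2 - 1).

(* Lorentz product of two distinct vertices, and the resulting force denominator. *)
Definition pair_lor (z : R) : R := - (3 * z ^ 2 - 1) / 2.
Definition pair_denom (z : R) : R := Rpower (pair_lor z ^ 2 - 1) (3 / 2).

Lemma rot_triangle_eq (z w : R) (i : nat) (t : R) :
  rot_triangle z w i t =
  mkV3 (rho z * cos (w * t + alpha3 i)) (rho z * sin (w * t + alpha3 i)) z.
Proof. reflexivity. Qed.

Lemma rho_sq (z : R) : 1 < z -> rho z * rho z = z ^ 2 - 1.
Proof. intros Hz. apply sqrt_sqrt. nra. Qed.

Lemma pair_denom_pos (z : R) : 0 < pair_denom z.
Proof. apply exp_pos. Qed.

Lemma rot_triangle_lor_self (z w : R) (i : nat) (t : R) : 1 < z ->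
  lor (rot_triangle z w i t) (rot_triangle z w i t) = -1.
Proof.
  intros Hz. rewrite !rot_triangle_eq. unfold lor; cbn [vx vy vz].
  pose proof (sin2_cos2 (w * t + alpha3 i)) as H. unfold Rsqr in H.
  transitivity (rho z * rho z * (sin (w * t + alpha3 i) * sin (w * t + alpha3 i)
                 + cos (w * t + alpha3 i) * cos (w * t + alpha3 i)) - z * z);
    [ring | rewrite H, rho_sq by exact Hz; ring].
Qed.

Lemma rot_triangle_lor_pair (z w : R) (i j : nat) (t : R) :
  1 < z -> (i < 3)%nat -> (j < 3)%nat -> i <> j ->
  lor (rot_triangle z w i t) (rot_triangle z w j t) = pair_lor z.
Proof.
  intros Hz Hi Hj Hij. rewrite !rot_triangle_eq. unfold lor; cbn [vx vy vz].
  transitivity (rho z * rho z * cos ((w * t + alpha3 i) - (w * t + alpha3 j)) - z * z).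
  - rewrite cos_minus. ring.
  - replace (w * t + alpha3 i - (w * t + alpha3 j)) with (alpha3 i - alpha3 j) by ring.
    rewrite cos_alpha3_diff, rho_sq by assumption. unfold pair_lor. field.
Qed.

(* Distinct vertices never collide: their product is not -1 since z > 1. *)
Lemma rot_triangle_distinct (z w t : R) (i j : nat) :
  1 < z -> (i < 3)%nat -> (j < 3)%nat -> i <> j ->
  rot_triangle z w i t <> rot_triangle z w j t.
Proof.
  intros Hz Hi Hj Hij E.
  pose proof (rot_triangle_lor_pair z w i j t Hz Hi Hj Hij) as H.
  rewrite E, rot_triangle_lor_self in H by exact Hz. unfold pair_lor in H. nra.
Qed.

Definition tri_vel (z w : R) (i : nat) (t : R) : V3 :=
  mkV3 (- rho z * w * sin (w * t + alpha3 i)) (rho z * w * cos (w * t + alpha3 i)) 0.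

Definition tri_acc (z w : R) (i : nat) (t : R) : V3 :=
  mkV3 (- rho z * w ^ 2 * cos (w * t + alpha3 i))
       (- rho z * w ^ 2 * sin (w * t + alpha3 i)) 0.

Lemma rot_triangle_has_deriv (z w : R) (i : nat) :
  has_deriv (rot_triangle z w i) (tri_vel z w i).
Proof.
  intro t; split; [|split].
  - exact (derivable_pt_lim_cos_phase (rho z) w (alpha3 i) t).
  - exact (derivable_pt_lim_sin_phase (rho z) w (alpha3 i) t).
  - exact (derivable_pt_lim_const z t).
Qed.

Lemma tri_vel_has_deriv (z w : R) (i : nat) : has_deriv (tri_vel z w i) (tri_acc z w i).
Proof.
  intro t; split; [|split]; cbn [vx vy vz tri_vel tri_acc].
  - replace (- rho z * w ^ 2 * cos (w * t + alpha3 i))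
      with (- rho z * w * w * cos (w * t + alpha3 i)) by ring.
    exact (derivable_pt_lim_sin_phase (- rho z * w) w (alpha3 i) t).
  - replace (- rho z * w ^ 2 * sin (w * t + alpha3 i))
      with (- (rho z * w) * w * sin (w * t + alpha3 i)) by ring.
    exact (derivable_pt_lim_cos_phase (rho z * w) w (alpha3 i) t).
  - exact (derivable_pt_lim_const 0 t).
Qed.

Lemma tri_vel_lor (z w : R) (i : nat) (t : R) : 1 < z ->
  lor (tri_vel z w i t) (tri_vel z w i t) = (z ^ 2 - 1) * w ^ 2.
Proof.
  intros Hz. unfold lor, tri_vel; cbn [vx vy vz].
  pose proof (sin2_cos2 (w * t + alpha3 i)) as H. unfold Rsqr in H.
  transitivity (rho z * rho z * w ^ 2 * (sin (w * t + alpha3 i) * sin (w * t + alpha3 i)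
                 + cos (w * t + alpha3 i) * cos (w * t + alpha3 i)));
    [ring | rewrite H, rho_sq by exact Hz; ring].
Qed.

Lemma force_equal_products (n : nat) (m : nat -> R) (q : nat -> V3) (i : nat) (c : R) :
  (forall j, (j < n)%nat -> j <> i -> lor (q i) (q j) = c) ->
  force n m q i =
  fold_right vadd v0
    (map (fun j => if Nat.eqb j i then v0 else
            vscale (m j / Rpower (c ^ 2 - 1) (3 / 2)) (vadd (q j) (vscale c (q i))))
         (seq 0 n)).
Proof.
  intros Hc. unfold force. f_equal. apply map_ext_in. intros j Hj.
  apply in_seq in Hj. destruct (Nat.eqb_spec j i) as [->|Hji]; [reflexivity|].
  rewrite Hc by lia. reflexivity.
Qed.

Lemma rot_triangle_force (z w t : R) (m : nat -> R) (i : nat) : 1 < z -> (i < 3)%nat ->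
  force 3 m (fun j => rot_triangle z w j t) i =
  fold_right vadd v0
    (map (fun j => if Nat.eqb j i then v0 else
            vscale (m j / pair_denom z)
              (vadd (rot_triangle z w j t) (vscale (pair_lor z) (rot_triangle z w i t))))
         (seq 0 3)).
Proof.
  intros Hz Hi. apply force_equal_products. intros j Hj Hji.
  apply rot_triangle_lor_pair; auto.
Qed.

Lemma rot_triangle_force_z (z w t : R) (m : nat -> R) (i : nat) : 1 < z -> (i < 3)%nat ->
  vz (force 3 m (fun j => rot_triangle z w j t) i) =
  (m 0%nat + m 1%nat + m 2%nat - m i) * (z * (1 + pair_lor z) / pair_denom z).
Proof.
  intros Hz Hi. pose proof (pair_denom_pos z).
  rewrite rot_triangle_force by assumption.
  destruct i as [|[|[|i]]]; try lia; cbn; field; lra.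
Qed.

Lemma rot_triangle_force_x (z w t mu : R) (i : nat) : 1 < z -> (i < 3)%nat ->
  vx (force 3 (fun _ => mu) (fun j => rot_triangle z w j t) i) =
  mu * (2 * pair_lor z - 1) / pair_denom z * (rho z * cos (w * t + alpha3 i)).
Proof.
  intros Hz Hi. pose proof (pair_denom_pos z).
  pose proof (f_equal (Rmult (mu * rho z / pair_denom z)) (sum_cos_alpha3 (w * t))).
  rewrite rot_triangle_force by assumption.
  destruct i as [|[|[|i]]]; try lia; cbn [seq map fold_right Nat.eqb vadd vscale vx v0];
    rewrite !rot_triangle_eq; cbn [vx vy]; lra.
Qed.

Lemma rot_triangle_force_y (z w t mu : R) (i : nat) : 1 < z -> (i < 3)%nat ->
  vy (force 3 (fun _ => mu) (fun j => rot_triangle z w j t) i) =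
  mu * (2 * pair_lor z - 1) / pair_denom z * (rho z * sin (w * t + alpha3 i)).
Proof.
  intros Hz Hi. pose proof (pair_denom_pos z).
  pose proof (f_equal (Rmult (mu * rho z / pair_denom z)) (sum_sin_alpha3 (w * t))).
  rewrite rot_triangle_force by assumption.
  destruct i as [|[|[|i]]]; try lia; cbn [seq map fold_right Nat.eqb vadd vscale vy v0];
    rewrite !rot_triangle_eq; cbn [vx vy]; lra.
Qed.

(* Velocity and acceleration of a solution are forced to be tri_vel and
   tri_acc, so a solution satisfies the explicit equation below. *)
Lemma rot_triangle_motion_eq (m : nat -> R) (z w t : R) (i : nat) :
  is_solution 3 m (rot_triangle z w) -> (i < 3)%nat ->
  tri_acc z w i t =
  vadd (force 3 m (fun j => rot_triangle z w j t) i)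
       (vscale (lor (tri_vel z w i t) (tri_vel z w i t)) (rot_triangle z w i t)).
Proof.
  intros [_ Hmotion] Hi. destruct (Hmotion i Hi) as [v [a [Hq [Hv Heq]]]].
  assert (Ev : v = tri_vel z w i)
    by exact (has_deriv_unique _ _ _ Hq (rot_triangle_has_deriv z w i)).
  subst v.
  assert (Ea : a = tri_acc z w i)
    by exact (has_deriv_unique _ _ _ Hv (tri_vel_has_deriv z w i)).
  subst a. apply (Heq t).
Qed.

(* Vertical balance: the triangle has no vertical acceleration, so the
   vertical pull of the other two bodies cancels the centripetal term. *)
Lemma rot_triangle_vertical_balance (m : nat -> R) (z w t : R) (i : nat) :
  1 < z -> is_solution 3 m (rot_triangle z w) -> (i < 3)%nat ->
  (m 0%nat + m 1%nat + m 2%nat - m i) * (z * (1 + pair_lor z) / pair_denom z)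
  + (z ^ 2 - 1) * w ^ 2 * z = 0.
Proof.
  intros Hz Hs Hi.
  pose proof (f_equal vz (rot_triangle_motion_eq m z w t i Hs Hi)) as E.
  cbn [vz tri_acc vadd vscale] in E.
  rewrite rot_triangle_force_z, tri_vel_lor, rot_triangle_eq in E by assumption.
  cbn [vz] in E. lra.
Qed.

Lemma rot_triangle_equal_masses (m : nat -> R) (z w : R) :
  1 < z -> is_solution 3 m (rot_triangle z w) -> m 0%nat = m 1%nat /\ m 1%nat = m 2%nat.
Proof.
  intros Hz Hs.
  pose proof (rot_triangle_vertical_balance m z w 0 0 Hz Hs ltac:(lia)) as B0.
  pose proof (rot_triangle_vertical_balance m z w 0 1 Hz Hs ltac:(lia)) as B1.
  pose proof (rot_triangle_vertical_balance m z w 0 2 Hz Hs ltac:(lia)) as B2.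
  set (K := z * (1 + pair_lor z) / pair_denom z) in *.
  assert (HK : K <> 0).
  { assert (Hneg : z * (1 + pair_lor z) < 0) by (unfold pair_lor; nra).
    assert (Hinv : 0 < / pair_denom z) by exact (Rinv_0_lt_compat _ (pair_denom_pos z)).
    unfold K, Rdiv. intro HK0. apply Rmult_integral in HK0. lra. }
  split; apply (Rmult_eq_reg_r K); [lra | exact HK | lra | exact HK].
Qed.

Lemma equal_masses_solution (mu z w : R) :
  1 < z -> w ^ 2 = 3 * mu / pair_denom z ->
  is_solution 3 (fun _ => mu) (rot_triangle z w).
Proof.
  intros Hz Hw. pose proof (pair_denom_pos z). split.
  - intros t i j Hi Hj Hij. exact (rot_triangle_distinct z w t i j Hz Hi Hj Hij).
  - intros i Hi. exists (tri_vel z w i), (tri_acc z w i).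
    split; [apply rot_triangle_has_deriv|]. split; [apply tri_vel_has_deriv|].
    intro t. split; [|split; [|split]].
    + rewrite tri_vel_lor by exact Hz.
      apply V3_ext; cbn [vx vy vz vadd vscale tri_acc];
        rewrite ?rot_triangle_force_x, ?rot_triangle_force_y, ?rot_triangle_force_z
          by assumption;
        rewrite rot_triangle_eq; cbn [vx vy vz]; rewrite Hw; unfold pair_lor;
        field; lra.
    + exact (rot_triangle_lor_self z w i t Hz).
    + rewrite rot_triangle_eq. unfold lor, tri_vel; cbn [vx vy vz]. ring.
    + rewrite rot_triangle_eq; cbn [vz]. lra.
Qed.

Lemma mass3_equal (mu : R) : mass3 mu mu mu = fun _ => mu.
Proof. apply functional_extensionality. intros [|[|]]; reflexivity. Qed.

Theorem mainTheorem14 (m1 m2 m3 z : R) :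
  0 < m1 -> 0 < m2 -> 0 < m3 -> 1 < z ->
  ((exists w : R, w <> 0 /\ is_solution 3 (mass3 m1 m2 m3) (rot_triangle z w))
   <-> (m1 = m2 /\ m2 = m3)).
Proof.
  intros Hm1 _ _ Hz. split.
  - intros [w [_ Hs]]. exact (rot_triangle_equal_masses _ z w Hz Hs).
  - intros [<- <-]. rewrite mass3_equal.
    assert (Hpos : 0 < 3 * m1 / pair_denom z)
      by (apply Rdiv_lt_0_compat; [lra | apply pair_denom_pos]).
    exists (sqrt (3 * m1 / pair_denom z)). split.
    + exact (Rgt_not_eq _ _ (sqrt_lt_R0 _ Hpos)).
    + apply equal_masses_solution; [exact Hz | apply pow2_sqrt; lra].
Qed.
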